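(* Consider the single-block on-chain auction game described in the context with $n=1$ (so $N=\{0,1\}$), $F=F_0=\mathrm{Uniform}[0,1]$, and reserve price $r>0$. Then the following strategy profile constitutes an equilibrium: (i) Bidder 1 bids truthfully, $b_1=v_1$, and tips $t_1(v_1)=v_1/2-r$ if $v_1>2r$ and $t_1(v_1)=0$ otherwise. (ii) Bidder 0, having observed bidder 1's tip $t_1$ and knowing his value $v_0$, bribes (i.e. offers the proposer a payment of $t_1$ in exchange for excluding bidder 1's bid) if $t_1+r\le v_0$, and does not bribe otherwise; moreover bidder 0 submits a nonzero bid in the auction if and only if he bribes. (iii) The proposer accepts bidder 0's bribe whenever it is offered and then excludes bidder 1's bid; otherwise the proposer includes both bids.
   Context: Single-block on-chain auction game. A seller has one indivisible good; there are $n+1$ buyers $N=\{0,1,\dots,n\}$, $n\ge 1$, with quasilinear utilities. Buyer $i$ has a private value $v_i$; $v_0$ is drawn from a distribution with CDF $F_0$, and $v_1,\dots,v_n$ are drawn i.i.d. from a distribution with CDF $F$, all independent, with supports $[0,1]$; $n,F,F_0$ are common knowledge. The seller runs a sealed-bid second-price auction with reserve price $r$ in which bids are accepted in a single block built by a single profit-maximizing proposer. Timing: (1) the seller announces the auction; (2) buyers learn their values; (3) buyers $1,\dots,n$ simultaneously submit a private (sealed) bid $b_i$ and a publicly observed tip $t_i\ge 0$; (4) buyer 0 observes the tips and his value $v_0$, and may make the proposer a take-it-or-leave-it offer of a subset $S\subseteq\{1,\dots,n\}$ and a payment $p$ to exclude the bids in $S$; buyer 0 also submits his own bid $b_0$;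 (5) the proposer accepts (including exactly the bids of $N\setminus S$ and receiving $p$) or rejects (including all bids); he accepts if and only if $p\ge\sum_{i\in S}t_i$; (6) the second-price auction is computed on the included bids: the highest included bid wins if it is at least $r$, paying the maximum of $r$ and the other included bids. A bidder pays his tip to the proposer iff his bid is included. Solution concept: perfect Bayesian equilibrium, restricted to profiles in which (a) bidders $1,\dots,n$ bid truthfully and use a common tipping function of their value, and (b) bidder 0 bids his value if, given the observed tips, he assigns positive probability to winning, and otherwise bids $0$ or does not bid. Such profiles are called equilibria. *)

From HB Require Import structures.
From mathcomp Require Import all_boot all_order all_algebra.
From mathcomp Require Import all_classical all_reals all_analysis.
Set Implicit Arguments. Unset Strict Implicit. Unset Printing Implicit Defensive.
Import Order.TTheory GRing.Theory Num.Theory.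
Local Open Scope classical_set_scope.
Local Open Scope ring_scope.

(* Single-block on-chain auction game with n = 1, i.e. N = {0, 1}.
   Values live in [0,1]; the prior of each value is Uniform[0,1], i.e. the
   Lebesgue measure restricted to [0,1].

   Actions:
   - bidder 1 : a (sealed) bid b1 : R and a public tip t1 >= 0;
   - bidder 0 : an optional take-it-or-leave-it offer  Some (S1, p)  where
       S1 = true means S = {1} and S1 = false means S = {} (the empty set),
       and p is the payment; plus an optional bid (None = does not bid);
   - proposer : accept (true) or reject (false) the offer, as a function of
       the publicly observed tip and the offer. *)

Section Game.
Variable R : realType.

Definition offer := option (bool * R).
Definition action0 := (offer * option R)%type.

Definition accepted (o : offer) (a : bool) : bool :=
  if o is Some _ then a else false.

Definition excl1 (o : offer) : bool :=
  if o is Some (S1, _) then S1 else false.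

Definition payment (o : offer) : R :=
  if o is Some (_, p) then p else 0.

Definition included1 (o : offer) (a : bool) : bool :=
  ~~ (accepted o a && excl1 o).

(* second-price auction with reserve r on the included bids
   (None = no included bid).  Ties between included bids are resolved in
   favour of bidder 1. *)
Definition wins0 (r : R) (b0 b1 : option R) : bool :=
  if b0 is Some x then (r <= x) && (if b1 is Some y then y < x else true)
  else false.

Definition wins1 (r : R) (b0 b1 : option R) : bool :=
  if b1 is Some y then (r <= y) && (if b0 is Some x then x <= y else true)
  else false.

Definition price (r : R) (other : option R) : R := Num.max r (odflt r other).

Definition incl_bid1 (b1 : R) (o : offer) (a : bool) : option R :=
  if included1 o a then Some b1 else None.

Definition u1 (r v1 b1 t1 : R) (a0 : action0) (a : bool) : R :=
  let B1 := incl_bid1 b1 a0.1 a in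
  (if wins1 r a0.2 B1 then v1 - price r a0.2 else 0)
  - (if included1 a0.1 a then t1 else 0).

Definition u0 (r v0 b1 : R) (a0 : action0) (a : bool) : R :=
  let B1 := incl_bid1 b1 a0.1 a in
  (if wins0 r a0.2 B1 then v0 - price r B1 else 0)
  - (if accepted a0.1 a then payment a0.1 else 0).

Definition uP (t1 : R) (o : offer) (a : bool) : R :=
  (if accepted o a then payment o else 0)
  + (if included1 o a then t1 else 0).

Definition unit_interval : set R := `[0, 1]%classic.

Definition EU1 (r : R) (s0 : R -> R -> action0) (acc : R -> offer -> bool)
    (v1 b1 t1 : R) : \bar R :=
  (\int[@lebesgue_measure R]_(v0 in unit_interval)
     (u1 r v1 b1 t1 (s0 t1 v0) (acc t1 (s0 t1 v0).1))%:E)%E.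

(* expected utility of bidder 0 (value v0) who observed the tip t1, holds
   the belief mu about v1 (bidder 1 bids truthfully), and plays a0 *)
Definition EU0 (r : R) (acc : R -> offer -> bool)
    (mu : probability (measurableTypeR R) R) (t1 v0 : R) (a0 : action0)
    : \bar R :=
  (\int[mu]_(v1 in [set: R]) (u0 r v0 v1 a0 (acc t1 a0.1))%:E)%E.

Definition tip_preimage (tau : R -> R) (t : R) : set R :=
  [set v | unit_interval v /\ tau v = t].

(* Beliefs of bidder 0 about v1 after observing tip t:
   - on path with a positive-probability tip: Bayes' rule (conditioning the
     uniform prior on the event tau v1 = t);
   - on path with a zero-probability tip: supported on the types sending t;
   - off path: an arbitrary probability on the type space [0,1]. *)
Definition belief_consistent (tau : R -> R)
    (mu : R -> probability (measurableTypeR R) R) : Prop :=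
  forall t : R, 0 <= t ->
    let E := tip_preimage tau t in
    (E = set0 -> mu t unit_interval = 1%E) /\
    (E !=set0 -> (0 < @lebesgue_measure R E)%E ->
       forall A : set (measurableTypeR R), measurable A ->
         (mu t A * @lebesgue_measure R E = @lebesgue_measure R (A `&` E))%E) /\
    (E !=set0 -> @lebesgue_measure R E = 0%E -> mu t E = 1%E).

Definition equilibrium (r : R) (tau : R -> R) (s0 : R -> R -> action0)
    (acc : R -> offer -> bool) : Prop :=
  (forall v1, unit_interval v1 -> 0 <= tau v1) /\
  (forall (t : R) (o : offer) (a : bool), 0 <= t -> uP t o a <= uP t o (acc t o)) /\
  exists mu : R -> probability (measurableTypeR R) R,
    belief_consistent tau mu /\
    (forall t v0 : R, 0 <= t -> unit_interval v0 ->
       forall a0 : action0, (EU0 r acc (mu t) t v0 a0 <= EU0 r acc (mu t) t v0 (s0 t v0))%E) /\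
    (forall t v0 : R, 0 <= t -> unit_interval v0 ->
       let o := (s0 t v0).1 in
       let W := [set v1 : R | wins0 r (Some v0) (incl_bid1 v1 o (acc t o))] in
       ((0 < mu t W)%E -> (s0 t v0).2 = Some v0) /\
       (mu t W = 0%E -> (s0 t v0).2 = None \/ (s0 t v0).2 = Some 0)) /\
    (forall v1 b1 t1 : R, unit_interval v1 -> 0 <= t1 ->
       (EU1 r s0 acc v1 b1 t1 <= EU1 r s0 acc v1 v1 (tau v1))%E).

Definition tip_star (r v1 : R) : R := if 2 * r < v1 then v1 / 2 - r else 0.

Definition s0_star (r : R) (nb : R -> R -> bool) (t v0 : R) : action0 :=
  if t + r <= v0 then (Some (true, t), Some v0)
  else (None, if nb t v0 then None else Some 0).

Definition acc_star (t : R) (o : offer) : bool :=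
  if o is Some (S1, p) then (if S1 then t else 0) <= p else false.

End Game.

From HB Require Import structures.
From mathcomp Require Import all_boot all_order all_algebra.
From mathcomp Require Import all_classical all_reals all_analysis.
From mathcomp Require Import measurable_realfun lra.
Import Order.TTheory GRing.Theory Num.Theory.
Set Implicit Arguments. Unset Strict Implicit. Unset Printing Implicit Defensive.
Local Open Scope classical_set_scope.
Local Open Scope ring_scope.

(** Since the proposer accepts any bribe covering the tip, bidder 0 who sees
    the tip [t] can secure the good at total cost [t + r] by bribing; so he
    bribes iff [t + r <= v0].  Hence a tip [t] makes bidder 1 win, at price
    [r], with probability [min (t + r) 1], and his expected payoff
    [((v1 - r)^+ - t) * min (t + r) 1] is maximised by [t = v1/2 - r] when
    [v1 > 2r] (AM-GM on [(v1 - s) s] with [s = t + r]) and by [t = 0]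
    otherwise.  A positive tip reveals [v1 = 2 (t + r)], and the zero tip
    pools the types in [[0, 2r]]: in both cases bidder 1's bid, if included,
    leaves bidder 0 no more than [v0 - r - t] from not bribing. *)

Ltac case_cmp :=
  let noif a := lazymatch a with context [if _ then _ else _] => fail | _ => idtac end in
  repeat match goal with
  | |- context [ if ?a <= ?b then _ else _ ] => noif b; case: (lerP a b) => ? /=
  | |- context [ if ?a < ?b then _ else _ ] => noif b; case: (ltrP a b) => ? /=
  | |- context [ (?a <= ?b) && _ ] => noif b; case: (lerP a b) => ? /=
  | |- context [ (?a < ?b) && _ ] => noif b; case: (ltrP a b) => ? /=
  | |- context [ _ && (?a <= ?b) ] => noif b; case: (lerP a b) => ? /=
  | |- context [ _ && (?a < ?b) ] => noif b; case: (ltrP a b) => ? /=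
  end.

Section probability_integrals.
Context d (T : measurableType d) (R : realType).
Local Open Scope ereal_scope.

Lemma integral_cst_probability (P : probability T R) (c : R) :
  \int[P]_(x in [set: T]) c%:E = c%:E.
Proof.
by rewrite integral_cst // -[RHS]mule1; congr (_ * _); exact: probability_setT.
Qed.

Lemma integral_le_bound_probability (P : probability T R) (f : T -> R) (B : R) :
  measurable_fun [set: T] f -> (forall x, (f x <= B)%R) -> (0 <= B)%R ->
  \int[P]_(x in [set: T]) (f x)%:E <= B%:E.
Proof.
move=> mf fB B0; rewrite integralE -[B%:E]sube0; apply: leeB; last first.
  by apply: integral_ge0 => x _; exact: funeneg_ge0.
rewrite -(integral_cst_probability P B); apply: ge0_le_integral => //.
- by apply: measurable_funepos; exact/measurable_EFinP.
- by move=> x _; rewrite funeposE /= ge_max !lee_fin fB B0.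
Qed.

HB.instance Definition _ (a : T) :=
  Measure_isProbability.Build _ _ R (@dirac d T a R) (diracT R a).

Definition dirac_prob (a : T) : probability T R :=
  Probability.clone _ _ _ (@dirac d T a R) _.

Lemma integral_dirac_prob (a : T) (f : T -> R) : measurable_fun [set: T] f ->
  \int[dirac_prob a]_(x in [set: T]) (f x)%:E = (f a)%:E.
Proof.
by move=> mf; rewrite integral_dirac ?diracT ?mul1e //; exact/measurable_EFinP.
Qed.

End probability_integrals.
Arguments dirac_prob {d T R} a.

Lemma uniform_probE (R : realType) (a b : R) (ab : a < b) (A : set R) :
  measurable A ->
  uniform_prob ab A = ((b - a)^-1%:E * lebesgue_measure (A `&` `[a, b]))%E.
Proof.
move=> mA; rewrite /uniform_prob integral_uniform_pdf.
rewrite (eq_integral (fun=> (b - a)^-1%:E)) ?integral_cst //; first exact: measurableI.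
by move=> x; rewrite inE /= in_itv /= /uniform_pdf => -[_ ->].
Qed.

Lemma lebesgue_unit_interval_lt (R : realType) (s : R) : 0 < s ->
  lebesgue_measure (@unit_interval R `&` [set v : R | v < s]) = (Num.min s 1)%:E.
Proof.
move=> s_gt0; rewrite minEle; case: (lerP s 1) => s1.
  have -> : @unit_interval R `&` [set v : R | v < s] = `[0, s[%classic.
    apply/seteqP; split => x /=; rewrite /unit_interval /= !in_itv /=.
      by move=> [/andP[-> _] ->].
    by move=> /andP[-> xs]; rewrite xs (ltW (lt_le_trans xs s1)).
  by rewrite lebesgue_measure_itv /= lte_fin s_gt0 -EFinD subr0.
have -> : @unit_interval R `&` [set v : R | v < s] = `[0, 1]%classic.
  apply/seteqP; split => x /=; rewrite /unit_interval /= !in_itv /=; first by case.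
  by move=> /andP[x0 x1]; rewrite x0 x1 (le_lt_trans x1 s1).
by rewrite lebesgue_measure_itv /= lte_fin ltr01 -EFinD subr0.
Qed.

Lemma acc_star_best_response (R : realType) (t : R) (o : offer R) (a : bool) :
  0 <= t -> uP t o a <= uP t o (acc_star t o).
Proof.
by move=> t0; case: o => [[[] p]|]; case: a; rewrite /uP /acc_star /=; case_cmp; lra.
Qed.

Lemma measurable_u0 (R : realType) (r v0 : R) (a0 : action0 R) (a : bool) :
  measurable_fun [set: R] (fun v1 => u0 r v0 v1 a0 a).
Proof.
case: a0 => o [x|]; rewrite /u0 /incl_bid1 /=; case: (included1 o a) => /=;
  try exact: measurable_cst.
rewrite /wins0 /price /=; case: (r <= x) => /=; last exact: measurable_cst.
apply: measurable_funB; last exact: measurable_cst.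
apply: measurable_fun_if => //.
- exact: (measurable_fun_ltr (f := id) (g := cst x)).
- apply/measurable_funTS/measurable_funB; first exact: measurable_cst.
  exact: (measurable_maxr (f := cst r) (g := id)).
Qed.

Section proposition2.
Variables (R : realType) (r : R) (nb : R -> R -> bool).

Definition bribe_surplus (t v0 : R) : R := Num.max (v0 - r - t) 0.

Lemma bribe_surplus_ge0 (t v0 : R) : 0 <= bribe_surplus t v0.
Proof. by rewrite le_max lexx orbT. Qed.

Definition win_surplus (b1 v1 : R) : R := if r <= b1 then v1 - r else 0.

Lemma tip_star_ge0 (v1 : R) : 0 < r -> 0 <= tip_star r v1.
Proof. by move=> r_gt0; rewrite /tip_star; case_cmp; lra. Qed.

Lemma u0_s0_star (t v0 v1 : R) : 0 < r -> 0 <= t ->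
  u0 r v0 v1 (s0_star r nb t v0) (acc_star t (s0_star r nb t v0).1) =
  bribe_surplus t v0.
Proof.
move=> r_gt0 t0; rewrite /s0_star /bribe_surplus maxEle; case: ifP => bribe; last first.
  by case: (nb t v0); rewrite /u0 /incl_bid1 /included1 /accepted /acc_star /wins0 /=;
    case_cmp; lra.
rewrite /u0 /incl_bid1 /included1 /accepted /excl1 /payment /acc_star /wins0 /price /=.
by rewrite lexx /= maxEle lexx; case_cmp; lra.
Qed.

Lemma u0_le_bribe_surplus (t v0 v1 : R) (a0 : action0 R) :
  0 <= t -> t = 0 \/ v0 <= v1 \/ t + r <= v1 ->
  u0 r v0 v1 a0 (acc_star t a0.1) <= bribe_surplus t v0.
Proof.
move=> t0 v1_large; case: a0 => o b0; rewrite /u0 /=.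
have paid_ge0 : 0 <= if accepted o (acc_star t o) then payment o else 0.
  by case: o => [[[] p]|] //=; rewrite /acc_star; case: ifP => //; lra.
have surplus_ge0 := bribe_surplus_ge0 t v0.
have surplus_ge : v0 - r - t <= bribe_surplus t v0 by rewrite le_max lexx.
rewrite /incl_bid1 /included1.
have [/andP[acc excl]|_] /= := boolP (accepted o (acc_star t o) && excl1 o);
  case: ifP => _; try lra.
  case: o acc excl paid_ge0 => [[[] p]|] //=; rewrite /acc_star /price /= => paid _.
  by rewrite paid maxxx; lra.
suff : v0 - price r (Some v1) <= bribe_surplus t v0 by lra.
by rewrite /price /= maxEle; case_cmp; case: v1_large => [t_eq0|[|]]; lra.
Qed.

Lemma u1_s0_star (v1 b1 t1 v0 : R) : 0 < r -> 0 <= t1 ->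
  u1 r v1 b1 t1 (s0_star r nb t1 v0) (acc_star t1 (s0_star r nb t1 v0).1) =
  if t1 + r <= v0 then 0 else win_surplus b1 v1 - t1.
Proof.
move=> r_gt0 t0; rewrite /s0_star /win_surplus; case: ifP => bribe.
  by rewrite /u1 /incl_bid1 /included1 /acc_star /wins1 /= lexx /= subr0.
by case: (nb t1 v0); rewrite /u1 /incl_bid1 /included1 /acc_star /wins1 /price /=
  ?maxEle ?lexx; case_cmp; lra.
Qed.

Lemma EU1_s0_star (v1 b1 t1 : R) : 0 < r -> 0 <= t1 ->
  EU1 r (s0_star r nb) (@acc_star R) v1 b1 t1 =
  ((win_surplus b1 v1 - t1) * Num.min (t1 + r) 1)%:E.
Proof.
move=> r_gt0 t0; rewrite /EU1 EFinM -lebesgue_unit_interval_lt; last lra.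
have mS : measurable (@unit_interval R `&` [set v | v < t1 + r]).
  by apply: measurableI; rewrite -?set_itvNyo; exact: measurable_itv.
rewrite -integral_cst; last exact: mS.
rewrite integral_mkcondr; apply: eq_integral => v0 _.
rewrite u1_s0_star // patchE; case: (lerP (t1 + r) v0) => v0_large.
  by rewrite memNset //= ltNge v0_large.
by rewrite mem_set.
Qed.

Lemma win_surplus_le_truthful (b1 v1 : R) : win_surplus b1 v1 <= win_surplus v1 v1.
Proof. by rewrite /win_surplus; case_cmp; lra. Qed.

Lemma tip_star_optimal (v1 t : R) : 0 < r -> 0 <= v1 <= 1 -> 0 <= t ->
  (win_surplus v1 v1 - t) * Num.min (t + r) 1 <=
  (win_surplus v1 v1 - tip_star r v1) * Num.min (tip_star r v1 + r) 1.
Proof.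
move=> r_gt0 /andP[v1_ge0 v1_le1] t0.
rewrite /win_surplus /tip_star !minEle.
case: (lerP r v1) => ?; case: (ltrP (2 * r) v1) => ?; case: (lerP (t + r) 1) => ?.
all: try (have -> : v1 / 2 - r + r <= 1 by lra).
all: try (have -> : 0 + r <= 1 by lra).
all: try (have -> : (0 + r <= 1) = false by apply/negbTE; rewrite -ltNge; lra).
all: try nra.
(* [(v1 - s) s <= (v1 / 2) ^ 2] for [s = t + r] *)
all: have := sqr_ge0 (v1 - 2 * (t + r)); nra.
Qed.

Lemma tip_star_best_response (v1 b1 t1 : R) :
  0 < r -> unit_interval v1 -> 0 <= t1 ->
  (EU1 r (s0_star r nb) (@acc_star R) v1 b1 t1 <=
   EU1 r (s0_star r nb) (@acc_star R) v1 v1 (tip_star r v1))%E.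
Proof.
move=> r_gt0 v1_01 t0; rewrite !EU1_s0_star ?tip_star_ge0 // lee_fin.
have v1_01' : 0 <= v1 <= 1 by move: v1_01; rewrite /unit_interval /= in_itv.
apply: le_trans (tip_star_optimal r_gt0 v1_01' t0).
apply: ler_wpM2r; first by rewrite le_min; apply/andP; split; lra.
by rewrite lerD2r win_surplus_le_truthful.
Qed.

Definition pooling_bound : R := Num.min (2 * r) 1.

(* Off the path ([2 (t + r) > 1]) the belief is still required to live on
   [[0, 1]]. *)
Definition revealed_value (t : R) : R := Num.min (2 * (t + r)) 1.

Lemma pooling_bound_gt0 : 0 < r -> 0 < pooling_bound.
Proof. by move=> r_gt0; rewrite lt_min; apply/andP; split; lra. Qed.

Definition belief_star (r_gt0 : 0 < r) (t : R) : probability (measurableTypeR R) R :=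
  if t == 0 then Probability.clone _ _ _ (uniform_prob (pooling_bound_gt0 r_gt0)) _
  else dirac_prob (revealed_value t : measurableTypeR R).

Lemma tip_preimage_tip_star0 :
  tip_preimage (tip_star r) 0 = `[0, pooling_bound]%classic.
Proof.
apply/seteqP; split => v;
  rewrite /tip_preimage /unit_interval /pooling_bound /= !in_itv /= le_min.
  by case=> /andP[-> ->]; rewrite /tip_star; case: ltrP => //; lra.
by move=> /and3P[-> v2r ->]; split=> //; rewrite /tip_star ltNge v2r.
Qed.

Lemma tip_preimage_tip_star_neq0 (t v : R) : t != 0 ->
  tip_preimage (tip_star r) t v -> v = 2 * (t + r) /\ v <= 1.
Proof.
move=> t_neq0; rewrite /tip_preimage /unit_interval /= in_itv /= => -[/andP[_ v_le1]].
rewrite /tip_star; case: ltrP => _ tv; last by rewrite -tv eqxx in t_neq0.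
by split=> //; lra.
Qed.

Lemma belief_star_consistent (r_gt0 : 0 < r) :
  belief_consistent (tip_star r) (belief_star r_gt0).
Proof.
move=> t t0 /=; rewrite /belief_star; case: eqP => [->|/eqP t_neq0].
  have pb_gt0 := pooling_bound_gt0 r_gt0.
  have leb_pool : lebesgue_measure `[0, pooling_bound]%classic = pooling_bound%:E.
    by rewrite lebesgue_measure_itv /= lte_fin pb_gt0 -EFinD subr0.
  rewrite tip_preimage_tip_star0 leb_pool; split; [|split].
  - move=> pool_eq0.
    have : `[0, pooling_bound]%classic 0 by rewrite /= in_itv /= lexx ltW.
    by rewrite pool_eq0.
  - move=> _ _ A mA; rewrite /= uniform_probE // subr0 muleAC -EFinM.
    by rewrite mulVf ?mul1e // gt_eqF.
  - by move=> _ /eqP; rewrite eqe gt_eqF.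
have preimage_eq v : tip_preimage (tip_star r) t v ->
    tip_preimage (tip_star r) t = [set v].
  move=> Ev; apply/seteqP; split => [w Ew|w /= -> //].
  have [-> _] := tip_preimage_tip_star_neq0 t_neq0 Ew.
  by have [-> _] := tip_preimage_tip_star_neq0 t_neq0 Ev.
split; [|split].
- move=> _; rewrite /= diracE mem_set // /unit_interval /= in_itv /= ge_min lexx orbT.
  by rewrite le_min ler01 andbT; lra.
- by move=> [v /preimage_eq ->]; rewrite lebesgue_measure_set1 ltxx.
- move=> [v Ev] _; have [v_eq v_le1] := tip_preimage_tip_star_neq0 t_neq0 Ev.
  by rewrite (preimage_eq v Ev) /= diracE /revealed_value minEle -v_eq v_le1 mem_set.
Qed.

Lemma EU0_s0_star (P : probability (measurableTypeR R) R) (t v0 : R) :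
  0 < r -> 0 <= t ->
  EU0 r (@acc_star R) P t v0 (s0_star r nb t v0) = (bribe_surplus t v0)%:E.
Proof.
move=> r_gt0 t0; rewrite /EU0.
under eq_integral => v1 _ do rewrite u0_s0_star //.
exact: integral_cst_probability.
Qed.

Lemma s0_star_best_response (r_gt0 : 0 < r) (t v0 : R) (a0 : action0 R) :
  0 <= t -> unit_interval v0 ->
  (EU0 r (@acc_star R) (belief_star r_gt0 t) t v0 a0 <=
   EU0 r (@acc_star R) (belief_star r_gt0 t) t v0 (s0_star r nb t v0))%E.
Proof.
move=> t0; rewrite EU0_s0_star // /EU0 /belief_star /unit_interval /= in_itv /=.
move=> /andP[v0_ge0 v0_le1]; case: eqP => [t_eq0|t_neq0].
  apply: integral_le_bound_probability; [exact: measurable_u0| |exact: bribe_surplus_ge0].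
  by move=> v1; apply: u0_le_bribe_surplus => //; left.
rewrite integral_dirac_prob ?lee_fin; last exact: measurable_u0.
apply: u0_le_bribe_surplus => //; right; rewrite /revealed_value minEle.
by case: (lerP (2 * (t + r)) 1) => _; [right|left]; lra.
Qed.

Lemma s0_star_bid_rule (r_gt0 : 0 < r) (t v0 : R) : 0 <= t -> unit_interval v0 ->
  let o := (s0_star r nb t v0).1 in
  let W := [set v1 : R | wins0 r (Some v0) (incl_bid1 v1 o (acc_star t o))] in
  ((0 < belief_star r_gt0 t W)%E -> (s0_star r nb t v0).2 = Some v0) /\
  (belief_star r_gt0 t W = 0%E ->
     (s0_star r nb t v0).2 = None \/ (s0_star r nb t v0).2 = Some 0).
Proof.
rewrite /unit_interval /= in_itv /= => t0 /andP[v0_ge0 v0_le1].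
rewrite /s0_star; case: ifP => [bribe|/negbT];
  rewrite /= /incl_bid1 /included1 /acc_star /=.
  split=> // W0; exfalso; move: W0; rewrite lexx /=.
  have -> : [set v1 : R | (r <= v0) && true] = [set: R].
    by apply/seteqP; split => // v1 _ /=; rewrite andbT; lra.
  by rewrite probability_setT => /eqP; rewrite onee_eq0.
rewrite -ltNge => no_bribe.
have -> : belief_star r_gt0 t [set v1 | (r <= v0) && (v1 < v0)] = 0%E.
  rewrite /belief_star; case: eqP => [t_eq0|_].
    have -> : [set v1 : R | (r <= v0) && (v1 < v0)] = set0.
      apply/seteqP; split=> // v1 /=.
      by move: no_bribe; rewrite t_eq0 add0r ltNge => /negbTE ->.
    exact: measure0.
  rewrite /= diracE memNset //= /revealed_value minEle => /andP[_].
  by case: (lerP (2 * (t + r)) 1) => _; lra.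
split; first by rewrite ltxx.
by case: (nb t v0); [left|right].
Qed.

End proposition2.

Theorem proposition2 (R : realType) (r : R) (nb : R -> R -> bool) :
  0 < r ->
  equilibrium r (tip_star r) (s0_star r nb) (@acc_star R).
Proof.
move=> r_gt0; split; first by move=> v1 _; exact: tip_star_ge0.
split; first by move=> t o a; exact: acc_star_best_response.
exists (belief_star r_gt0); split; first exact: belief_star_consistent.
split; first by move=> t v0 t0 v0_01 a0; exact: s0_star_best_response.
split; first by move=> t v0; exact: s0_star_bid_rule.
by move=> v1 b1 t1; exact: tip_star_best_response.
Qed.
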